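(* For every formula $\varphi$ containing no occurrence of $\mathbf{GF}$ or $\mathbf{FG}$, each of $\mathbf{GF}\varphi$ and $\mathbf{FG}\varphi$ is equivalent to a formula in normal form with at most $3^{|\varphi|}\cdot|\varphi|$ nodes.
   Context: Fix a finite set $Ap$ of atomic propositions. A word is an infinite sequence $w = w[0]w[1]\dots$ of letters of $2^{Ap}$, and $w_i$ denotes the suffix $w[i]w[i+1]\dots$. Formulas are generated by $\varphi ::= \mathbf{true} \mid \mathbf{false} \mid a \mid \neg a \mid \varphi\wedge\varphi \mid \varphi\vee\varphi \mid \mathbf{X}\varphi \mid \varphi\,\mathbf{U}\,\varphi \mid \varphi\,\mathbf{W}\,\varphi \mid \mathbf{GF}\varphi \mid \mathbf{FG}\varphi$ ($a\in Ap$), where $\mathbf{GF}$, $\mathbf{FG}$ are single unary operators (limit operators). Semantics: $w\models a$ iff $a\in w[0]$, $w\models\neg a$ iff $a\notin w[0]$, Boolean constants and connectives as usual; $w\models\mathbf{X}\varphi$ iff $w_1\models\varphi$; $w\models\varphi\mathbf{U}\psi$ iff $\exists k$: $w_k\models\psi$ and $\forall j<k$: $w_j\models\varphi$; $w\models\varphi\mathbf{W}\psi$ iff ($\forall k$: $w_k\models\varphi$) or $w\models\varphi\mathbf{U}\psi$; $w\models\mathbf{GF}\varphi$ iff $w_k\models\varphi$ for infinitely many $k$; $w\models\mathbf{FG}\varphi$ iff $\exists n\,\forall k\geq n$: $w_k\models\varphi$. Two formulas are equivalent if satisfied by the same words. The syntax tree $T_\varphi$ has leaves $\mathbf{true},\mathbf{false},a,\neg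 a$ and one internal node per operator occurrence; $|\varphi|$ is its number of nodes. $\mathbf{U}$-, $\mathbf{W}$-, $\mathbf{X}$-, $\mathbf{GF}$-, $\mathbf{FG}$-nodes are nodes whose subformula has that top operator; $\mathbf{GF}$- and $\mathbf{FG}$-nodes are limit nodes; all five kinds are temporal nodes. A node is under another if it is a proper descendant of it. A formula is in normal form if (1) no $\mathbf{U}$-node is under a $\mathbf{W}$-node; (2) no limit node is under another temporal node; (3) no $\mathbf{W}$-node is under a $\mathbf{GF}$-node and no $\mathbf{U}$-node is under an $\mathbf{FG}$-node. *)

From mathcomp Require Import all_boot.
Set Implicit Arguments. Unset Strict Implicit. Unset Printing Implicit Defensive.

Inductive form (Ap : Type) : Type :=
| FTrue | FFalse
| FAtom of Ap | FNAtom of Ap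
| FAnd of form Ap & form Ap
| FOr  of form Ap & form Ap
| FX   of form Ap
| FU   of form Ap & form Ap
| FW   of form Ap & form Ap
| FGF  of form Ap
| FFG  of form Ap.

Arguments FTrue {Ap}. Arguments FFalse {Ap}.

Definition word (Ap : finType) := nat -> {set Ap}.

(* sat w i phi  <->  w_i |= phi  (w_i is the suffix starting at position i) *)
Fixpoint sat (Ap : finType) (w : word Ap) (i : nat) (phi : form Ap) : Prop :=
  match phi with
  | FTrue => True
  | FFalse => False
  | FAtom a => a \in w i
  | FNAtom a => a \notin w i
  | FAnd p q => sat w i p /\ sat w i q
  | FOr p q => sat w i p \/ sat w i q
  | FX p => sat w (i.+1) p
  | FU p q => exists k, sat w (i + k) q /\ forall j, j < k -> sat w (i + j) p
  | FW p q => (forall k, sat w (i + k) p) \/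
              (exists k, sat w (i + k) q /\ forall j, j < k -> sat w (i + j) p)
  | FGF p => forall n, exists k, n <= k /\ sat w (i + k) p
  | FFG p => exists n, forall k, n <= k -> sat w (i + k) p
  end.

Definition ltl_equiv (Ap : finType) (phi psi : form Ap) : Prop :=
  forall w : word Ap, sat w 0 phi <-> sat w 0 psi.

Fixpoint fsize (Ap : Type) (phi : form Ap) : nat :=
  match phi with
  | FTrue | FFalse | FAtom _ | FNAtom _ => 1
  | FAnd p q | FOr p q | FU p q | FW p q => (fsize p + fsize q).+1
  | FX p | FGF p | FFG p => (fsize p).+1
  end.

Fixpoint has_U (Ap : Type) (phi : form Ap) : bool :=
  match phi with
  | FTrue | FFalse | FAtom _ | FNAtom _ => false
  | FU _ _ => true
  | FAnd p q | FOr p q | FW p q => has_U p || has_U q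
  | FX p | FGF p | FFG p => has_U p
  end.

Fixpoint has_W (Ap : Type) (phi : form Ap) : bool :=
  match phi with
  | FTrue | FFalse | FAtom _ | FNAtom _ => false
  | FW _ _ => true
  | FAnd p q | FOr p q | FU p q => has_W p || has_W q
  | FX p | FGF p | FFG p => has_W p
  end.

Fixpoint has_lim (Ap : Type) (phi : form Ap) : bool :=
  match phi with
  | FTrue | FFalse | FAtom _ | FNAtom _ => false
  | FGF _ | FFG _ => true
  | FAnd p q | FOr p q | FU p q | FW p q => has_lim p || has_lim q
  | FX p => has_lim p
  end.

(* Normal form: for every node, the constraints on the nodes strictly below it:
   (1) no U-node under a W-node;
   (2) no limit node under a temporal (X,U,W,GF,FG) node;
   (3) no W-node under a GF-node, no U-node under an FG-node. *)
Fixpoint normal_form (Ap : Type) (phi : form Ap) : bool :=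
  match phi with
  | FTrue | FFalse | FAtom _ | FNAtom _ => true
  | FAnd p q | FOr p q => normal_form p && normal_form q
  | FX p => ~~ has_lim p && normal_form p
  | FU p q => [&& ~~ has_lim p, ~~ has_lim q, normal_form p & normal_form q]
  | FW p q => [&& ~~ has_U p, ~~ has_U q, ~~ has_lim p, ~~ has_lim q,
                  normal_form p & normal_form q]
  | FGF p => [&& ~~ has_lim p, ~~ has_W p & normal_form p]
  | FFG p => [&& ~~ has_lim p, ~~ has_U p & normal_form p]
  end.

From mathcomp Require Import all_boot zify.
From Stdlib Require Import Classical.
Set Implicit Arguments. Unset Strict Implicit.
Set Bullet Behavior "Strict Subproofs".

(* Guess, for every U-node x U y of phi, whether GF (x U y) holds and, for every
   W-node x W y, whether FG (x W y) holds.  Under correct guesses, replacing each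
   W-node by true or by U (according to its guess) yields a W-free formula that
   agrees with phi from some position on, and replacing each U-node by W or by
   false yields such a U-free formula; so GF phi and FG phi become GF of a W-free
   and FG of a U-free formula.  The guesses themselves can be stated as GF/FG of
   the rewritten subformulas, and checked by induction on phi.  Hence GF phi is
   equivalent to the disjunction, over all 2^k markings (k the number of U- and
   W-nodes), of "the guesses hold and GF of the rewritten phi", which is in normal
   form and has fewer than 2^k (k+1) (|phi|+2) <= 3^|phi| |phi| nodes. *)

Section LimitSemantics.
Variables (Ap : finType) (w : word Ap).

Definition inf_often (f : form Ap) := forall n, exists k, n <= k /\ sat w k f.
Definition ev_always (f : form Ap) := exists n, forall k, n <= k -> sat w k f.

Definition entails_from N (f g : form Ap) := forall i, N <= i -> sat w i f -> sat w i g.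

Definition ev_entails f g := exists N, entails_from N f g.

Lemma entails_from_le M N f g : M <= N -> entails_from M f g -> entails_from N f g.
Proof. by move=> MN H i Ni; apply: H; apply: leq_trans Ni. Qed.

Lemma entails_from_And N x x' y y' :
  entails_from N x x' -> entails_from N y y' -> entails_from N (FAnd x y) (FAnd x' y').
Proof. by move=> Hx Hy i Ni [hx hy]; split; [apply: Hx | apply: Hy]. Qed.

Lemma entails_from_Or N x x' y y' :
  entails_from N x x' -> entails_from N y y' -> entails_from N (FOr x y) (FOr x' y').
Proof. by move=> Hx Hy i Ni [hx | hy]; [left; apply: Hx | right; apply: Hy]. Qed.

Lemma entails_from_X N x x' : entails_from N x x' -> entails_from N (FX x) (FX x').
Proof. by move=> Hx i Ni; apply: Hx; apply: leqW. Qed.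

Lemma entails_from_U N x x' y y' :
  entails_from N x x' -> entails_from N y y' -> entails_from N (FU x y) (FU x' y').
Proof.
move=> Hx Hy i Ni [k [hy hx]]; exists k; split=> [|j jk].
- by apply: Hy hy; apply: leq_trans (leq_addr k i).
- by apply: Hx (hx j jk); apply: leq_trans (leq_addr j i).
Qed.

Lemma entails_from_W N x x' y y' :
  entails_from N x x' -> entails_from N y y' -> entails_from N (FW x y) (FW x' y').
Proof.
move=> Hx Hy i Ni [hx | hu]; last by right; apply: entails_from_U Hx Hy i Ni hu.
by left=> k; apply: Hx (hx k); apply: leq_trans (leq_addr k i).
Qed.

Lemma entails_from_UW N x x' y y' :
  entails_from N x x' -> entails_from N y y' -> entails_from N (FU x y) (FW x' y').
Proof. by move=> Hx Hy i Ni hu; right; apply: entails_from_U Hx Hy i Ni hu. Qed.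

Lemma ev_entails_mono2 (C C' : form Ap -> form Ap -> form Ap) :
    (forall N x x' y y', entails_from N x x' -> entails_from N y y' ->
       entails_from N (C x y) (C' x' y')) ->
  forall x x' y y', ev_entails x x' -> ev_entails y y' -> ev_entails (C x y) (C' x' y').
Proof.
move=> HC x x' y y' [M Hx] [N Hy]; exists (maxn M N).
by apply: HC; [apply: entails_from_le Hx | apply: entails_from_le Hy];
  rewrite ?leq_maxl ?leq_maxr.
Qed.

Lemma inf_often_ev_entails f g : inf_often f -> ev_entails f g -> inf_often g.
Proof.
move=> Hf [N H] n; have [k [nk hk]] := Hf (n + N).
by exists k; split; [lia | apply: H hk; lia].
Qed.

Lemma ev_always_ev_entails f g : ev_always f -> ev_entails f g -> ev_always g.
Proof. by move=> [n Hf] [N H]; exists (n + N) => k nk; apply: H (Hf k _); lia. Qed.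

Lemma ev_entails_False f : ~ inf_often f -> ev_entails f FFalse.
Proof.
move=> Hf; apply: NNPP => H; apply: Hf => n; apply: NNPP => Hn; apply: H.
by exists n => k nk hk; apply: Hn; exists k.
Qed.

Lemma ev_entails_True f : ev_always f -> ev_entails FTrue f.
Proof. by move=> [n H]; exists n => k nk _; apply: H. Qed.

Lemma sat_U_of_W_inf_often i x y :
  sat w i (FW x y) -> inf_often (FU x y) -> sat w i (FU x y).
Proof.
move=> [hx | //] /(_ i) [k [ik [k' [hy _]]]].
exists (k - i + k'); split=> [|j _]; last exact: hx.
by have -> : i + (k - i + k') = k + k' by lia.
Qed.

Lemma sat_U_of_W_not_ev_always i x y :
  sat w i (FW x y) -> ~ ev_always (FW x y) -> sat w i (FU x y).
Proof.
move=> [hx | //] Hn; exfalso; apply: Hn; exists i => k ik; left => j.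
by have := hx (k - i + j); have -> : i + (k - i + j) = k + j by lia.
Qed.

End LimitSemantics.

(* The flag of an [MU] node is the guess "GF (x U y)", that of an [MW] node the
   guess "FG (x W y)". *)
Inductive mform (Ap : Type) : Type :=
| MTrue | MFalse | MAtom of Ap | MNAtom of Ap
| MAnd of mform Ap & mform Ap | MOr of mform Ap & mform Ap
| MX of mform Ap
| MU of bool & mform Ap & mform Ap
| MW of bool & mform Ap & mform Ap.
Arguments MTrue {Ap}. Arguments MFalse {Ap}.

Fixpoint unmark Ap (t : mform Ap) : form Ap :=
  match t with
  | MTrue => FTrue | MFalse => FFalse | MAtom a => FAtom a | MNAtom a => FNAtom a
  | MAnd x y => FAnd (unmark x) (unmark y) | MOr x y => FOr (unmark x) (unmark y)
  | MX x => FX (unmark x)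
  | MU _ x y => FU (unmark x) (unmark y)
  | MW _ x y => FW (unmark x) (unmark y)
  end.

Fixpoint mu Ap (t : mform Ap) : form Ap :=
  match t with
  | MTrue => FTrue | MFalse => FFalse | MAtom a => FAtom a | MNAtom a => FNAtom a
  | MAnd x y => FAnd (mu x) (mu y) | MOr x y => FOr (mu x) (mu y)
  | MX x => FX (mu x)
  | MU _ x y => FU (mu x) (mu y)
  | MW m x y => if m then FTrue else FU (mu x) (mu y)
  end.

Fixpoint nu Ap (t : mform Ap) : form Ap :=
  match t with
  | MTrue => FTrue | MFalse => FFalse | MAtom a => FAtom a | MNAtom a => FNAtom a
  | MAnd x y => FAnd (nu x) (nu y) | MOr x y => FOr (nu x) (nu y)
  | MX x => FX (nu x)
  | MU m x y => if m then FW (nu x) (nu y) else FFalse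
  | MW _ x y => FW (nu x) (nu y)
  end.

Fixpoint all_marks Ap (PU PW : bool -> mform Ap -> mform Ap -> Prop) (t : mform Ap) : Prop :=
  match t with
  | MAnd x y | MOr x y => all_marks PU PW x /\ all_marks PU PW y
  | MX x => all_marks PU PW x
  | MU m x y => [/\ PU m x y, all_marks PU PW x & all_marks PU PW y]
  | MW m x y => [/\ PW m x y, all_marks PU PW x & all_marks PU PW y]
  | _ => True
  end.

Section Markings.
Variables (Ap : finType) (w : word Ap).

Definition marking_sound : mform Ap -> Prop :=
  all_marks (fun m x y => m -> inf_often w (FU (unmark x) (unmark y)))
            (fun m x y => m -> ev_always w (FW (unmark x) (unmark y))).

Definition marking_complete : mform Ap -> Prop :=
  all_marks (fun m x y => ~~ m -> ~ inf_often w (FU (unmark x) (unmark y)))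
            (fun m x y => ~~ m -> ~ ev_always w (FW (unmark x) (unmark y))).

(* The true guesses restated through [mu] and [nu] of the subformulas, so that
   they can be written in normal form. *)
Definition guesses_hold : mform Ap -> Prop :=
  all_marks (fun m x y => m -> inf_often w (FU (mu x) (mu y)))
            (fun m x y => m -> ev_always w (FW (nu x) (nu y))).

Lemma nu_entails_unmark t : marking_sound t -> entails_from w 0 (nu t) (unmark t).
Proof.
rewrite /marking_sound.
elim: t => [||a|a|x IHx y IHy|x IHx y IHy|x IHx|m x IHx y IHy|m x IHx y IHy] /=;
  try by move=> _ i.
- by move=> [/IHx Hx /IHy Hy]; apply: entails_from_And.
- by move=> [/IHx Hx /IHy Hy]; apply: entails_from_Or.
- by move/IHx; apply: entails_from_X.
- case: m => [[/(_ isT) Hinf /IHx Hx /IHy Hy] i _ hW|_ _ //].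
  exact/sat_U_of_W_inf_often/Hinf/(entails_from_W Hx Hy).
- by move=> [_ /IHx Hx /IHy Hy]; apply: entails_from_W.
Qed.

Lemma unmark_entails_mu t : marking_complete t -> entails_from w 0 (unmark t) (mu t).
Proof.
rewrite /marking_complete.
elim: t => [||a|a|x IHx y IHy|x IHx y IHy|x IHx|m x IHx y IHy|m x IHx y IHy] /=;
  try by move=> _ i.
- by move=> [/IHx Hx /IHy Hy]; apply: entails_from_And.
- by move=> [/IHx Hx /IHy Hy]; apply: entails_from_Or.
- by move/IHx; apply: entails_from_X.
- by move=> [_ /IHx Hx /IHy Hy]; apply: entails_from_U.
- case: m => [_ i|[/(_ isT) Hev /IHx Hx /IHy Hy] i _ hW] //.
  exact/(entails_from_U Hx Hy)/sat_U_of_W_not_ev_always/Hev.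
Qed.

Lemma unmark_ev_entails_nu t : marking_complete t -> ev_entails w (unmark t) (nu t).
Proof.
rewrite /marking_complete.
elim: t => [||a|a|x IHx y IHy|x IHx y IHy|x IHx|m x IHx y IHy|m x IHx y IHy] /=;
  try by exists 0 => i.
- by move=> [/IHx Hx /IHy Hy]; apply: ev_entails_mono2 Hx Hy; apply: entails_from_And.
- by move=> [/IHx Hx /IHy Hy]; apply: ev_entails_mono2 Hx Hy; apply: entails_from_Or.
- by move=> /IHx [N Hx]; exists N; apply: entails_from_X.
- case: m => [[_ /IHx Hx /IHy Hy]|[/(_ isT) Hinf _ _]].
  + by apply: ev_entails_mono2 Hx Hy; apply: entails_from_UW.
  + exact: ev_entails_False.
- by move=> [_ /IHx Hx /IHy Hy]; apply: ev_entails_mono2 Hx Hy; apply: entails_from_W.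
Qed.

Lemma mu_ev_entails_unmark t : marking_sound t -> ev_entails w (mu t) (unmark t).
Proof.
rewrite /marking_sound.
elim: t => [||a|a|x IHx y IHy|x IHx y IHy|x IHx|m x IHx y IHy|m x IHx y IHy] /=;
  try by exists 0 => i.
- by move=> [/IHx Hx /IHy Hy]; apply: ev_entails_mono2 Hx Hy; apply: entails_from_And.
- by move=> [/IHx Hx /IHy Hy]; apply: ev_entails_mono2 Hx Hy; apply: entails_from_Or.
- by move=> /IHx [N Hx]; exists N; apply: entails_from_X.
- by move=> [_ /IHx Hx /IHy Hy]; apply: ev_entails_mono2 Hx Hy; apply: entails_from_U.
- case: m => [[/(_ isT) Hev _ _]|[_ /IHx Hx /IHy Hy]].
  + exact: ev_entails_True.
  + by apply: ev_entails_mono2 Hx Hy; apply: entails_from_UW.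
Qed.

Lemma marking_sound_of_guesses t : guesses_hold t -> marking_sound t.
Proof.
rewrite /guesses_hold /marking_sound.
elim: t => [||a|a|x IHx y IHy|x IHx y IHy|x IHx|m x IHx y IHy|m x IHx y IHy] //=.
- by move=> [/IHx Sx /IHy Sy].
- by move=> [/IHx Sx /IHy Sy].
- move=> [Hinf /IHx Sx /IHy Sy]; split=> // /Hinf Hmu.
  apply: inf_often_ev_entails Hmu _.
  apply: ev_entails_mono2 (mu_ev_entails_unmark Sx) (mu_ev_entails_unmark Sy).
  exact: entails_from_U.
- move=> [Hev /IHx Sx /IHy Sy]; split=> // /Hev Hnu.
  apply: ev_always_ev_entails Hnu _; exists 0.
  by apply: entails_from_W; apply: nu_entails_unmark.
Qed.

Lemma guesses_of_marking_sound t : marking_complete t -> marking_sound t -> guesses_hold t.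
Proof.
rewrite /marking_complete /marking_sound /guesses_hold.
elim: t => [||a|a|x IHx y IHy|x IHx y IHy|x IHx|m x IHx y IHy|m x IHx y IHy] //=.
- by move=> [Cx Cy] [Sx Sy]; split; [apply: IHx | apply: IHy].
- by move=> [Cx Cy] [Sx Sy]; split; [apply: IHx | apply: IHy].
- move=> [_ Cx Cy] [Hinf Sx Sy]; split; [move=> /Hinf HU | exact: IHx | exact: IHy].
  apply: inf_often_ev_entails HU _; exists 0.
  by apply: entails_from_U; apply: unmark_entails_mu.
- move=> [_ Cx Cy] [Hev Sx Sy]; split; [move=> /Hev HW | exact: IHx | exact: IHy].
  apply: ev_always_ev_entails HW _.
  apply: ev_entails_mono2 (unmark_ev_entails_nu Cx) (unmark_ev_entails_nu Cy).
  exact: entails_from_W.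
Qed.

Lemma exists_exact_marking p :
  ~~ has_lim p -> exists2 t, unmark t = p & marking_sound t /\ marking_complete t.
Proof.
elim: p => [||a|a|p IHp q IHq|p IHp q IHq|p IHp|p IHp q IHq|p IHp q IHq|//|//] /=.
- by exists MTrue.
- by exists MFalse.
- by exists (MAtom a).
- by exists (MNAtom a).
- rewrite negb_or => /andP[/IHp[x <- [Sx Cx]] /IHq[y <- [Sy Cy]]].
  by exists (MAnd x y).
- rewrite negb_or => /andP[/IHp[x <- [Sx Cx]] /IHq[y <- [Sy Cy]]].
  by exists (MOr x y).
- by move=> /IHp[x <- [Sx Cx]]; exists (MX x).
- rewrite negb_or => /andP[/IHp[x <- [Sx Cx]] /IHq[y <- [Sy Cy]]].
  have [Hinf | Hinf] := classic (inf_often w (FU (unmark x) (unmark y))).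
  + by exists (MU true x y); do 2 split.
  + by exists (MU false x y); do 2 split.
- rewrite negb_or => /andP[/IHp[x <- [Sx Cx]] /IHq[y <- [Sy Cy]]].
  have [Hev | Hev] := classic (ev_always w (FW (unmark x) (unmark y))).
  + by exists (MW true x y); do 2 split.
  + by exists (MW false x y); do 2 split.
Qed.

End Markings.

(* Accumulator-passing, so that a marking without true guesses adds no node. *)
Fixpoint and_guesses Ap (t : mform Ap) (acc : form Ap) : form Ap :=
  match t with
  | MAnd x y | MOr x y => and_guesses x (and_guesses y acc)
  | MX x => and_guesses x acc
  | MU m x y => let acc' := and_guesses x (and_guesses y acc) in
                if m then FAnd (FGF (FU (mu x) (mu y))) acc' else acc'
  | MW m x y => let acc' := and_guesses x (and_guesses y acc) in
                if m then FAnd (FFG (FW (nu x) (nu y))) acc' else acc'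
  | _ => acc
  end.

Fixpoint or_markings Ap (p : form Ap) (k : mform Ap -> form Ap) : form Ap :=
  match p with
  | FTrue => k MTrue | FFalse => k MFalse | FAtom a => k (MAtom a) | FNAtom a => k (MNAtom a)
  | FAnd p q => or_markings p (fun x => or_markings q (fun y => k (MAnd x y)))
  | FOr p q => or_markings p (fun x => or_markings q (fun y => k (MOr x y)))
  | FX p => or_markings p (fun x => k (MX x))
  | FU p q => FOr (or_markings p (fun x => or_markings q (fun y => k (MU true x y))))
                  (or_markings p (fun x => or_markings q (fun y => k (MU false x y))))
  | FW p q => FOr (or_markings p (fun x => or_markings q (fun y => k (MW true x y))))
                  (or_markings p (fun x => or_markings q (fun y => k (MW false x y))))
  | FGF _ | FFG _ => FFalse
  end.

Definition guarded_disj Ap (p : form Ap) (body : mform Ap -> form Ap) : form Ap :=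
  or_markings p (fun t => and_guesses t (body t)).

Section Equivalence.
Variables (Ap : finType) (w : word Ap).

Lemma sat_and_guesses t acc :
  sat w 0 (and_guesses t acc) <-> guesses_hold w t /\ sat w 0 acc.
Proof.
rewrite /guesses_hold.
elim: t acc => [||a|a|x IHx y IHy|x IHx y IHy|x IHx|m x IHx y IHy|m x IHx y IHy] acc /=;
  rewrite ?IHx ?IHy; try tauto.
- case: m => /=; rewrite IHx IHy; last by split=> [[? [? ?]] | [[_ ? ?] ?]].
  by split=> [[HG [Gx [Gy Hacc]]] | [[HG Gx Gy] Hacc]]; do !split=> //; apply: HG.
- case: m => /=; rewrite IHx IHy; last by split=> [[? [? ?]] | [[_ ? ?] ?]].
  by split=> [[HG [Gx [Gy Hacc]]] | [[HG Gx Gy] Hacc]]; do !split=> //; apply: HG.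
Qed.

Lemma sat_or_markings_intro i t k : sat w i (k t) -> sat w i (or_markings (unmark t) k).
Proof.
elim: t k => [||a|a|x IHx y IHy|x IHx y IHy|x IHx|[] x IHx y IHy|[] x IHx y IHy] k //= H.
- by apply: IHx; apply: IHy.
- by apply: IHx; apply: IHy.
- by apply: IHx.
- by left; apply: IHx; apply: IHy.
- by right; apply: IHx; apply: IHy.
- by left; apply: IHx; apply: IHy.
- by right; apply: IHx; apply: IHy.
Qed.

Lemma sat_or_markings_elim i p k :
  sat w i (or_markings p k) -> exists2 t, unmark t = p & sat w i (k t).
Proof.
elim: p k => [||a|a|p IHp q IHq|p IHp q IHq|p IHp|p IHp q IHq|p IHp q IHq|//|//] k /=.
- by exists MTrue.
- by exists MFalse.
- by exists (MAtom a).
- by exists (MNAtom a).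
- by move=> /IHp[x <- /IHq[y <- H]]; exists (MAnd x y).
- by move=> /IHp[x <- /IHq[y <- H]]; exists (MOr x y).
- by move=> /IHp[x <- H]; exists (MX x).
- by move=> [] /IHp[x <- /IHq[y <- H]]; [exists (MU true x y) | exists (MU false x y)].
- by move=> [] /IHp[x <- /IHq[y <- H]]; [exists (MW true x y) | exists (MW false x y)].
Qed.

Lemma sat_guarded_disj p body :
  sat w 0 (guarded_disj p body) <->
  exists2 t, unmark t = p & guesses_hold w t /\ sat w 0 (body t).
Proof.
split=> [/sat_or_markings_elim[t <- /sat_and_guesses H] | [t <- /sat_and_guesses H]].
- by exists t.
- exact: sat_or_markings_intro.
Qed.

Lemma sat_FGF_markings p : ~~ has_lim p ->
  sat w 0 (FGF p) <-> exists2 t, unmark t = p & guesses_hold w t /\ inf_often w (mu t).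
Proof.
move=> /(exists_exact_marking w)[t Et [St Ct]]; split=> [HG | [t' <- [Gt' Hmu]]].
- exists t => //; split; first exact: guesses_of_marking_sound.
  by apply: inf_often_ev_entails HG _; exists 0; rewrite -Et; apply: unmark_entails_mu.
- exact: inf_often_ev_entails Hmu (mu_ev_entails_unmark (marking_sound_of_guesses Gt')).
Qed.

Lemma sat_FFG_markings p : ~~ has_lim p ->
  sat w 0 (FFG p) <-> exists2 t, unmark t = p & guesses_hold w t /\ ev_always w (nu t).
Proof.
move=> /(exists_exact_marking w)[t Et [St Ct]]; split=> [HF | [t' <- [Gt' Hnu]]].
- exists t => //; split; first exact: guesses_of_marking_sound.
  by apply: ev_always_ev_entails HF _; rewrite -Et; apply: unmark_ev_entails_nu.
- apply: ev_always_ev_entails Hnu _; exists 0.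
  exact/nu_entails_unmark/marking_sound_of_guesses.
Qed.

End Equivalence.

Section NormalForm.
Variable Ap : Type.

Lemma normal_form_noW (f : form Ap) : ~~ has_lim f -> ~~ has_W f -> normal_form f.
Proof.
elim: f => //= [p IHp q IHq|p IHp q IHq|p IHp|p IHp q IHq]; rewrite ?negb_or.
- by move=> /andP[lp lq] /andP[wp wq]; rewrite IHp ?IHq.
- by move=> /andP[lp lq] /andP[wp wq]; rewrite IHp ?IHq.
- by move=> lp wp; rewrite lp IHp.
- by move=> /andP[lp lq] /andP[wp wq]; rewrite lp lq IHp ?IHq.
Qed.

Lemma normal_form_noU (f : form Ap) : ~~ has_lim f -> ~~ has_U f -> normal_form f.
Proof.
elim: f => //= [p IHp q IHq|p IHp q IHq|p IHp|p IHp q IHq]; rewrite ?negb_or.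
- by move=> /andP[lp lq] /andP[up uq]; rewrite IHp ?IHq.
- by move=> /andP[lp lq] /andP[up uq]; rewrite IHp ?IHq.
- by move=> lp up; rewrite lp IHp.
- by move=> /andP[lp lq] /andP[up uq]; rewrite lp lq up uq IHp ?IHq.
Qed.

Lemma has_lim_mu (t : mform Ap) : has_lim (mu t) = false.
Proof.
by elim: t => //= [x IHx y IHy|x IHx y IHy|m x IHx y IHy|[] x IHx y IHy]; rewrite /= ?IHx ?IHy.
Qed.

Lemma has_W_mu (t : mform Ap) : has_W (mu t) = false.
Proof.
by elim: t => //= [x IHx y IHy|x IHx y IHy|m x IHx y IHy|[] x IHx y IHy]; rewrite /= ?IHx ?IHy.
Qed.

Lemma has_lim_nu (t : mform Ap) : has_lim (nu t) = false.
Proof.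
by elim: t => //= [x IHx y IHy|x IHx y IHy|[] x IHx y IHy|m x IHx y IHy]; rewrite /= ?IHx ?IHy.
Qed.

Lemma has_U_nu (t : mform Ap) : has_U (nu t) = false.
Proof.
by elim: t => //= [x IHx y IHy|x IHx y IHy|[] x IHx y IHy|m x IHx y IHy]; rewrite /= ?IHx ?IHy.
Qed.

Lemma normal_form_FGF_mu (t : mform Ap) : normal_form (FGF (mu t)).
Proof. by rewrite /= has_lim_mu has_W_mu normal_form_noW ?has_lim_mu ?has_W_mu. Qed.

Lemma normal_form_FFG_nu (t : mform Ap) : normal_form (FFG (nu t)).
Proof. by rewrite /= has_lim_nu has_U_nu normal_form_noU ?has_lim_nu ?has_U_nu. Qed.

Lemma normal_form_and_guesses (t : mform Ap) acc :
  normal_form acc -> normal_form (and_guesses t acc).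
Proof.
elim: t acc => [||a|a|x IHx y IHy|x IHx y IHy|x IHx|[] x IHx y IHy|[] x IHx y IHy] acc nf_acc;
  rewrite /= ?IHx ?IHy ?andbT //.
- exact: (normal_form_FGF_mu (MU true x y)).
- exact: (normal_form_FFG_nu (MW true x y)).
Qed.

Lemma normal_form_or_markings (p : form Ap) k :
  (forall t, normal_form (k t)) -> normal_form (or_markings p k).
Proof.
elim: p k => [||a|a|p IHp q IHq|p IHp q IHq|p IHp|p IHp q IHq|p IHp q IHq|//|//] k nf_k //=.
- by apply: IHp => x; apply: IHq.
- by apply: IHp => x; apply: IHq.
- exact: IHp.
- by apply/andP; split; apply: IHp => x; apply: IHq.
- by apply/andP; split; apply: IHp => x; apply: IHq.
Qed.

Lemma normal_form_guarded_disj (p : form Ap) body :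
  (forall t, normal_form (body t)) -> normal_form (guarded_disj p body).
Proof.
by move=> nf_body; apply: normal_form_or_markings => t; apply: normal_form_and_guesses.
Qed.

End NormalForm.

Fixpoint num_UW Ap (p : form Ap) : nat :=
  match p with
  | FTrue | FFalse | FAtom _ | FNAtom _ => 0
  | FAnd p q | FOr p q => num_UW p + num_UW q
  | FU p q | FW p q => (num_UW p + num_UW q).+1
  | FX p | FGF p | FFG p => num_UW p
  end.

Lemma exp2_mul_le_exp3 c n : 2 * c < n -> 2 ^ c * (c.+1 * n.+2) <= 3 ^ n * n.
Proof.
move=> lt_cn.
have le_c : c.+1 <= 2 ^ c by apply: ltn_expl.
have le_4_9 : 2 ^ c * 2 ^ c <= 3 ^ (2 * c).
  by rewrite -expnMn expnM; case: (c) => // c'; rewrite leq_exp2r.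
have ge_3 : 3 <= 3 ^ (n - 2 * c) by rewrite -{1}(expn1 3) leq_pexp2l // subn_gt0.
have -> : 3 ^ n * n = 3 ^ (2 * c) * (3 ^ (n - 2 * c) * n).
  by rewrite mulnA -expnD subnKC // ltnW.
apply: (leq_trans (leq_mul (leqnn _) (leq_mul le_c (leqnn _)))).
rewrite mulnA leq_mul //; nia.
Qed.

Section Size.
Variable Ap : Type.

Lemma num_UW_lt_fsize (p : form Ap) : 2 * num_UW p < fsize p.
Proof. by elim: p => //= *; lia. Qed.

Lemma fsize_mu (t : mform Ap) : fsize (mu t) <= fsize (unmark t).
Proof.
by elim: t => [||a|a|x IHx y IHy|x IHx y IHy|x IHx|m x IHx y IHy|[] x IHx y IHy] /=; lia.
Qed.

Lemma fsize_nu (t : mform Ap) : fsize (nu t) <= fsize (unmark t).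
Proof.
by elim: t => [||a|a|x IHx y IHy|x IHx y IHy|x IHx|[] x IHx y IHy|m x IHx y IHy] /=; lia.
Qed.

Lemma fsize_and_guesses (t : mform Ap) acc :
  fsize (and_guesses t acc) <= fsize acc + num_UW (unmark t) * (fsize (unmark t)).+2.
Proof.
elim: t acc => [||a|a|x IHx y IHy|x IHx y IHy|x IHx|m x IHx y IHy|m x IHx y IHy] acc /=;
  try lia.
- have := IHx (and_guesses y acc); have := IHy acc; nia.
- have := IHx (and_guesses y acc); have := IHy acc; nia.
- have := IHx acc; nia.
- have := IHx (and_guesses y acc); have := IHy acc; have := fsize_mu x; have := fsize_mu y.
  case: m => /=; nia.
- have := IHx (and_guesses y acc); have := IHy acc; have := fsize_nu x; have := fsize_nu y.
  case: m => /=; nia.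
Qed.

Definition or_markings_bounded (p : form Ap) := forall (k : mform Ap -> form Ap) B,
  (forall t, unmark t = p -> fsize (k t) < B) -> fsize (or_markings p k) < 2 ^ num_UW p * B.

Lemma or_markings_bounded_nest p q : or_markings_bounded p -> or_markings_bounded q ->
  forall (C : mform Ap -> mform Ap -> mform Ap) k B,
    (forall x y, unmark x = p -> unmark y = q -> fsize (k (C x y)) < B) ->
  fsize (or_markings p (fun x => or_markings q (fun y => k (C x y))))
    < 2 ^ (num_UW p + num_UW q) * B.
Proof.
move=> bp bq C k B H; rewrite expnD -mulnA.
by apply: bp => x Ex; apply: bq => y Ey; apply: H.
Qed.

Lemma or_markings_bounded_of_lim_free p : ~~ has_lim p -> or_markings_bounded p.
Proof.
elim: p => [||a|a|p IHp q IHq|p IHp q IHq|p IHp|p IHp q IHq|p IHp q IHq|//|//];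
  rewrite /= ?negb_or; try by move=> _ k B H; rewrite expn0 mul1n; apply: H.
- move=> /andP[/IHp bp /IHq bq] k B H.
  by apply: (or_markings_bounded_nest bp bq) => x y Ex Ey; apply: H; rewrite /= Ex Ey.
- move=> /andP[/IHp bp /IHq bq] k B H.
  by apply: (or_markings_bounded_nest bp bq) => x y Ex Ey; apply: H; rewrite /= Ex Ey.
- by move=> /IHp bp k B H; apply: bp => x Ex; apply: H; rewrite /= Ex.
- move=> /andP[/IHp bp /IHq bq] k B H.
  have bound m : fsize (or_markings p (fun x => or_markings q (fun y => k (MU m x y))))
                   < 2 ^ (num_UW p + num_UW q) * B.
    by apply: (or_markings_bounded_nest bp bq) => x y Ex Ey; apply: H; rewrite /= Ex Ey.
  by have := bound true; have := bound false; rewrite /= expnS; lia.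
- move=> /andP[/IHp bp /IHq bq] k B H.
  have bound m : fsize (or_markings p (fun x => or_markings q (fun y => k (MW m x y))))
                   < 2 ^ (num_UW p + num_UW q) * B.
    by apply: (or_markings_bounded_nest bp bq) => x y Ex Ey; apply: H; rewrite /= Ex Ey.
  by have := bound true; have := bound false; rewrite /= expnS; lia.
Qed.

Lemma fsize_guarded_disj p (body : mform Ap -> form Ap) : ~~ has_lim p ->
    (forall t, fsize (body t) <= (fsize (unmark t)).+1) ->
  fsize (guarded_disj p body) <= 3 ^ fsize p * fsize p.
Proof.
move=> lim_p body_le; set c := num_UW p; set n := fsize p.
have disjunct_lt t : unmark t = p -> fsize (and_guesses t (body t)) < c.+1 * n.+2.
  move=> Et; have := fsize_and_guesses t (body t); have := body_le t; rewrite Et -/c -/n.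
  by nia.
apply: leq_trans (ltnW (or_markings_bounded_of_lim_free lim_p disjunct_lt)) _.
exact: exp2_mul_le_exp3 (num_UW_lt_fsize p).
Qed.

End Size.

Theorem proposition3 (Ap : finType) (phi : form Ap) :
  ~~ has_lim phi ->
  (exists psi : form Ap, normal_form psi /\
      fsize psi <= 3 ^ fsize phi * fsize phi /\ ltl_equiv (FGF phi) psi) /\
  (exists psi : form Ap, normal_form psi /\
      fsize psi <= 3 ^ fsize phi * fsize phi /\ ltl_equiv (FFG phi) psi).
Proof.
move=> lim_phi; split.
- exists (guarded_disj phi (fun t => FGF (mu t))); split; [|split].
  + exact/normal_form_guarded_disj/normal_form_FGF_mu.
  + by apply: fsize_guarded_disj => // t; apply: fsize_mu.
  + by move=> w; rewrite sat_FGF_markings // sat_guarded_disj.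
- exists (guarded_disj phi (fun t => FFG (nu t))); split; [|split].
  + exact/normal_form_guarded_disj/normal_form_FFG_nu.
  + by apply: fsize_guarded_disj => // t; apply: fsize_nu.
  + by move=> w; rewrite sat_FFG_markings // sat_guarded_disj.
Qed.
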